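(* Let \((G,k)\) be an instance of Vertex Cover. None of Reduction Rules 1, 2 and 3 applies to \((G,k)\) if and only if \(\mathrm{surplus}(G)\geq 2\).
   Context: All graphs are finite, undirected and simple. \(LPVC(G)\) is the LP: minimize \(\sum_v x_v\) subject to \(x_u+x_v\ge1\) for each edge \(\{u,v\}\) and \(0\le x_v\le1\). For \(X\subseteq V(G)\), \(N(X)\) is the set of vertices outside \(X\) adjacent to some vertex of \(X\); for an independent set \(Z\), \(\mathrm{surplus}(Z)=|N(Z)|-|Z|\); \(\mathrm{surplus}(G)\) is the minimum of \(\mathrm{surplus}(Z)\) over all nonempty independent sets \(Z\) of \(G\). Reduction Rule 1 applies iff the all-\(\frac12\) assignment is not the unique optimum solution of \(LPVC(G)\). Reduction Rule 2 applies iff Rule 1 does not apply and there is an independent set \(Z\) with \(\mathrm{surplus}(Z)=1\) such that \(N(Z)\) is not independent. Reduction Rule 3 applies iff neither Rule 1 nor Rule 2 applies and there is an independent set \(Z\) with \(\mathrm{surplus}(Z)=1\) such that \(N(Z)\) is independent. *)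

From mathcomp Require Import all_boot all_order all_algebra.
Set Implicit Arguments. Unset Strict Implicit. Unset Printing Implicit Defensive.
Import Order.TTheory GRing.Theory Num.Theory.
Local Open Scope ring_scope.

(* A finite simple graph is a vertex type T : finType with an adjacency
   relation e : rel T, assumed symmetric and irreflexive in the theorem. *)
Section Defs.
Variable T : finType.
Variable e : rel T.

Definition independent (Z : {set T}) : bool :=
  [forall x in Z, forall y in Z, ~~ e x y].

Definition nbh (X : {set T}) : {set T} :=
  [set y | (y \notin X) && [exists x in X, e x y]].

Definition surplus (Z : {set T}) : int := (#|nbh Z|%:Z - #|Z|%:Z)%R.

(* surplus(G) >= k, where surplus(G) is the minimum of surplus(Z) over all
   nonempty independent sets Z (minimum over the empty family = +infinity). *)
Definition surplusG_ge (k : int) : Prop :=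
  forall Z : {set T}, Z != set0 -> independent Z -> k <= surplus Z.

Variable R : realFieldType.

Definition lpvc_feasible (x : T -> R) : Prop :=
  (forall u v, e u v -> 1 <= x u + x v) /\ (forall v, 0 <= x v <= 1).

Definition lpvc_value (x : T -> R) : R := \sum_(v : T) x v.

Definition lpvc_optimal (x : T -> R) : Prop :=
  lpvc_feasible x /\ forall y, lpvc_feasible y -> lpvc_value x <= lpvc_value y.

Definition all_half : T -> R := fun _ => 2^-1.

Definition half_unique_optimum : Prop :=
  lpvc_optimal all_half /\
  forall x, lpvc_optimal x -> forall v, x v = all_half v.

(* (G,k) instance of Vertex Cover; k does not influence the rules. *)
Definition rule1_applies (k : nat) : Prop := ~ half_unique_optimum.

Definition rule2_applies (k : nat) : Prop :=
  ~ rule1_applies k /\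
  exists Z : {set T}, [/\ independent Z, surplus Z = 1 & ~~ independent (nbh Z)].

Definition rule3_applies (k : nat) : Prop :=
  ~ rule1_applies k /\ ~ rule2_applies k /\
  exists Z : {set T}, [/\ independent Z, surplus Z = 1 & independent (nbh Z)].

End Defs.

Set Warnings "-notation-overridden,-ambiguous-paths".
From mathcomp Require Import all_boot all_order all_algebra.
From mathcomp Require Import zify lra.
From Stdlib Require Import Classical.
Import Order.TTheory GRing.Theory Num.Theory.
Local Open Scope ring_scope.
Set Implicit Arguments. Unset Strict Implicit.

(* A vector x is LP-feasible iff its deviation d = x - 1/2 satisfies
   d u + d v >= 0 on every edge and |d| <= 1/2.  If a nonempty independent
   set Z has |N(Z)| <= |Z|, putting 0 on Z, 1 on N(Z) and 1/2 elsewhere gives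
   a second optimum.  Conversely, if |N(Z)| > |Z| for all such Z, every
   nonzero edge-nonnegative d has positive sum: the vertices at the bottom
   level -max|d| form an independent set whose neighbours all lie at the top
   level +max|d|, so the top level is strictly more populated, and flattening
   both extreme levels to the next level decreases the sum while keeping the
   edge constraints; induction on the number of levels concludes.  Given
   surplus(G) >= 1, Rules 2 and 3 together exclude exactly surplus 1. *)

Section SurplusHalfOptimum.
Variables (R : realFieldType) (T : finType) (e : rel T).
Implicit Types (Z A : {set T}) (d x : T -> R) (s : seq R).

Lemma sum_indicator A : \sum_v ((v \in A)%:R : R) = #|A|%:R.
Proof.
rewrite (eq_bigr (fun v => if v \in A then 1 else 0)) => [|v _]; last by case: (v \in A).
by rewrite -big_mkcond sumr_const.
Qed.

Lemma surplus_set0 : surplus e set0 = 0.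
Proof.
rewrite /surplus; have -> : nbh e set0 = set0.
  by apply/setP => y; rewrite !inE /=; apply/negbTE/existsP => -[x]; rewrite inE.
by rewrite subrr.
Qed.

Lemma card_lt_nbh Z :
  surplusG_ge e 1 -> Z != set0 -> independent e Z -> (#|Z| < #|nbh e Z|)%N.
Proof. by move=> H Zne Zind; have := H Z Zne Zind; rewrite /surplus; lia. Qed.

Lemma independent_mem_nbh Z u v : independent e Z -> u \in Z -> e u v -> v \in nbh e Z.
Proof.
move=> Zind uZ euv; rewrite inE; apply/andP; split.
  by apply: contraL euv => vZ; move/forall_inP: Zind => /(_ u uZ)/forall_inP/(_ v vZ).
by apply/existsP; exists u; rewrite uZ.
Qed.

Definition nbh_shift Z : T -> R :=
  fun v => if v \in Z then 0 else if v \in nbh e Z then 1 else 2^-1.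

Lemma nbh_shift_feasible Z :
  symmetric e -> independent e Z -> lpvc_feasible e (nbh_shift Z).
Proof.
move=> e_sym Zind; split => [u v euv | v]; rewrite /nbh_shift; last first.
  by case: (v \in Z); [|case: (v \in nbh e Z)]; apply/andP; split; lra.
have notZ w : w \in nbh e Z -> w \notin Z by rewrite inE => /andP [].
case: (boolP (u \in Z)) => uZ.
  have vN := independent_mem_nbh Zind uZ euv.
  by rewrite (negbTE (notZ _ vN)) vN; lra.
case: (boolP (v \in Z)) => vZ.
  have uN : u \in nbh e Z by apply: independent_mem_nbh Zind vZ _; rewrite e_sym.
  by rewrite uN; lra.
by case: (u \in nbh e Z); case: (v \in nbh e Z); lra.
Qed.

Lemma nbh_shift_value Z :
  lpvc_value (nbh_shift Z)
  = lpvc_value (@all_half T R) + 2^-1 * (#|nbh e Z|%:R - #|Z|%:R).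
Proof.
rewrite -!sum_indicator -sumrB mulr_sumr -big_split; apply: eq_bigr => v _.
rewrite /nbh_shift /all_half; case: (boolP (v \in Z)) => vZ.
  by rewrite inE vZ /=; lra.
by case: (v \in nbh e Z) => /=; lra.
Qed.

Lemma surplus_ge1_of_half_unique :
  symmetric e -> half_unique_optimum e R -> surplusG_ge e 1.
Proof.
move=> e_sym [[_ half_opt] half_uniq] Z Zne Zind.
suff : ~~ (#|nbh e Z| <= #|Z|)%N by rewrite /surplus; lia.
apply/negP => le_nbh_Z.
have shift_opt : lpvc_optimal e (nbh_shift Z).
  split=> [|y fy]; first exact: nbh_shift_feasible.
  apply: le_trans (half_opt _ fy); rewrite nbh_shift_value gerDl.
  by apply: mulr_ge0_le0; [lra | rewrite subr_le0 ler_nat].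
case/set0Pn: Zne => v vZ.
by have := half_uniq _ shift_opt v; rewrite /nbh_shift /all_half vZ; lra.
Qed.

Definition edge_nonneg d := forall u v, e u v -> 0 <= d u + d v.

Definition levels_in d s := forall v, d v != 0 -> `|d v| \in s.

Lemma card_bottom_lt_top d a :
  surplusG_ge e 1 -> edge_nonneg d -> 0 < a ->
  (forall v, `|d v| <= a) -> (exists v, `|d v| = a) ->
  (#|[set v | d v == - a]| < #|[set v | d v == a]|)%N.
Proof.
move=> Hs Hd a_gt0 le_a [w dw].
have bounds v : - a <= d v <= a by rewrite -ler_norml.
set L := [set v | d v == - a]; set U := [set v | d v == a].
have [L0 | L_ne] := eqVneq L set0.
  rewrite L0 cards0 card_gt0; apply/set0Pn; exists w; rewrite inE.
  move: dw; case: (ger0P (d w)) => _ dw; first by rewrite dw eqxx.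
  have : w \in L by rewrite inE -dw opprK.
  by rewrite L0 inE.
have L_ind : independent e L.
  apply/forall_inP => u uL; apply/forall_inP => v vL; apply/negP => euv.
  by have := Hd u v euv; move: uL vL; rewrite !inE => /eqP -> /eqP ->; lra.
have nbhL_sub : nbh e L \subset U.
  apply/subsetP => u; rewrite !inE => /andP [_ /existsP [v /andP [vL evu]]].
  have := Hd v u evu; have := bounds u; move: vL; rewrite inE => /eqP ->.
  by move=> /andP [_ ?] ?; apply/eqP; lra.
exact: leq_trans (card_lt_nbh Hs L_ne L_ind) (subset_leq_card nbhL_sub).
Qed.

Lemma next_level (f : T -> R) a : 0 < a -> (forall v, 0 <= f v) ->
  exists b, [/\ 0 <= b < a, forall v, f v < a -> f v <= b
              & b != 0 -> exists v, f v = b].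
Proof.
move=> a_gt0 f_ge0.
case: (boolP [exists v, 0 < f v < a]) => [/existsP [w0 /andP [_ fw0]] | none].
  case: (@arg_maxP _ R T w0 (fun v => f v < a) f fw0) => w fw max_w.
  exists (f w); split=> [|v /max_w //|_]; last by exists w.
  by rewrite f_ge0 fw.
exists 0; split=> [|v fv|]; rewrite ?eqxx //; first by rewrite lexx a_gt0.
by move/existsPn: none => /(_ v); rewrite fv andbT -leNgt.
Qed.

Section Truncation.
Variables (d : T -> R) (a b : R).
Hypotheses (b_ge0 : 0 <= b) (b_lt_a : b < a).
Hypothesis le_a : forall v, `|d v| <= a.
Hypothesis le_b : forall v, `|d v| < a -> `|d v| <= b.

Definition truncate : T -> R :=
  fun v => if d v == a then b else if d v == - a then - b else d v.

Lemma truncate_spec v :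
  [\/ d v = a /\ truncate v = b, d v = - a /\ truncate v = - b
    | - b <= d v <= b /\ truncate v = d v].
Proof.
rewrite /truncate; case: eqP => [|da]; first by constructor 1.
case: eqP => [|dNa]; first by constructor 2.
constructor 3; split=> //; rewrite -ler_norml; apply: le_b.
rewrite lt_neqAle le_a andbT; apply/eqP.
by case: (ger0P (d v)) => _ dv; [apply: da | apply: dNa; rewrite -dv opprK].
Qed.

Lemma truncate_edge_nonneg : edge_nonneg d -> edge_nonneg truncate.
Proof.
move=> Hd u v euv; move: (Hd u v euv) b_ge0 b_lt_a.
have := le_a u; have := le_a v; rewrite !ler_norml => /andP [? ?] /andP [? ?].
by case: (truncate_spec u) => [[? ->]|[? ->]|[/andP [? ?] ->]];
   case: (truncate_spec v) => [[? ->]|[? ->]|[/andP [? ?] ->]]; lra.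
Qed.

Lemma sum_truncate :
  \sum_v d v - \sum_v truncate v
  = (a - b) * (#|[set v | d v == a]|%:R - #|[set v | d v == - a]|%:R).
Proof.
move: b_ge0 b_lt_a => b0 ba; have aNa : (a == - a) = false by apply/negbTE/eqP; lra.
rewrite -!sum_indicator -!sumrB mulr_sumr; apply: eq_bigr => v _; rewrite !inE.
case: (truncate_spec v) => [[-> ->]|[-> ->]|[/andP [lo hi] ->]].
- by rewrite eqxx aNa /=; lra.
- by rewrite eqxx eq_sym aNa /=; lra.
- by rewrite lt_eqF ?gt_eqF /=; lra.
Qed.

Lemma levels_in_truncate s :
  levels_in d s -> (b != 0 -> b \in s) -> levels_in truncate (rem a s).
Proof.
move=> Hs b_in v; case: (truncate_spec v) => [[_ ->]|[_ ->]|[/andP [? ?] ->]].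
- by move=> b0; rewrite ger0_norm // rem_mem ?b_in // lt_eqF.
- by rewrite oppr_eq0 normrN => b0; rewrite ger0_norm // rem_mem ?b_in // lt_eqF.
- move=> dv0; rewrite rem_mem ?Hs // lt_eqF //.
  by apply: le_lt_trans b_lt_a; rewrite ler_norml; apply/andP.
Qed.

End Truncation.

Lemma edge_nonneg_descent d s :
  surplusG_ge e 1 -> edge_nonneg d -> levels_in d s -> (exists v, d v != 0) ->
  exists y a, [/\ a \in s, edge_nonneg y, levels_in y (rem a s)
               & \sum_v y v < \sum_v d v].
Proof.
move=> Hs Hd Hl [v0 dv0].
case: (@arg_maxP _ R T v0 xpredT (fun v => `|d v|) isT) => w _ max_w.
set a := `|d w|; have le_a v : `|d v| <= a by exact: max_w.
have a_gt0 : 0 < a by apply: lt_le_trans (le_a v0); rewrite normr_gt0.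
have [b [/andP [b_ge0 b_lt_a] le_b b_level]] :=
  next_level a_gt0 (fun v => normr_ge0 (d v)).
exists (truncate d a b), a; split.
- by apply: Hl; rewrite -normr_gt0.
- exact: truncate_edge_nonneg.
- apply: levels_in_truncate => // b0; have [v dv] := b_level b0.
  by rewrite -dv; apply: Hl; rewrite -normr_gt0 dv lt_def b0.
- rewrite -subr_gt0 sum_truncate // mulr_gt0 ?subr_gt0 ?ltr_nat //.
  by apply: card_bottom_lt_top => //; exists w.
Qed.

Lemma sum_ge0_edge_nonneg d s :
  surplusG_ge e 1 -> edge_nonneg d -> levels_in d s -> 0 <= \sum_v d v.
Proof.
move=> Hs; have [n] := ubnP (size s); elim: n d s => // n IH d s size_s Hd Hl.
case: (boolP [exists v, d v != 0]) => [/existsP nz | /existsPn z].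
  have [y [a [a_in Hy Hly lt_sum]]] := edge_nonneg_descent Hs Hd Hl nz.
  apply: le_trans (ltW lt_sum); apply: IH Hy Hly.
  have s_gt0 : (0 < size s)%N by case: (s) a_in.
  by rewrite size_rem // -ltnS prednK.
by rewrite big1 // => v _; apply/eqP; rewrite -[_ == _]negbK z.
Qed.

Lemma sum_gt0_edge_nonneg d :
  surplusG_ge e 1 -> edge_nonneg d -> (exists v, d v != 0) -> 0 < \sum_v d v.
Proof.
move=> Hs Hd nz; pose s := [seq `|d v| | v <- enum T].
have Hl : levels_in d s by move=> v _; apply: map_f; rewrite mem_enum.
have [y [a [_ Hy Hly lt_sum]]] := edge_nonneg_descent Hs Hd Hl nz.
exact: le_lt_trans (sum_ge0_edge_nonneg Hs Hy Hly) lt_sum.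
Qed.

Lemma lpvc_value_gt_half x :
  surplusG_ge e 1 -> lpvc_feasible e x -> (exists v, x v != 2^-1) ->
  lpvc_value (@all_half T R) < lpvc_value x.
Proof.
move=> Hs [Hx _] [v xv]; rewrite -subr_gt0 /lpvc_value -sumrB.
apply: sum_gt0_edge_nonneg => // [u w euw|].
  by have := Hx u w euw; rewrite /all_half; lra.
by exists v; rewrite /all_half subr_eq0.
Qed.

Lemma half_unique_of_surplus_ge1 : surplusG_ge e 1 -> half_unique_optimum e R.
Proof.
move=> Hs; have half_feas : lpvc_feasible e (@all_half T R).
  by split=> [u v _|v]; rewrite /all_half; [lra | apply/andP; split; lra].
split=> [|x [fx x_opt] v].
  split=> // x fx.
  case: (boolP [exists v, x v != 2^-1]) => [/existsP nz | /existsPn eq_half].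
    exact/ltW/lpvc_value_gt_half.
  rewrite /lpvc_value (eq_bigr x) // => v _.
  by apply/esym/eqP; exact: negbNE (eq_half v).
apply/eqP; apply: contraT => xv.
have := lt_le_trans (lpvc_value_gt_half Hs fx (ex_intro _ v xv)) (x_opt _ half_feas).
by rewrite ltxx.
Qed.

Lemma half_unique_optimumP :
  symmetric e -> half_unique_optimum e R <-> surplusG_ge e 1.
Proof.
move=> e_sym; split; first exact: surplus_ge1_of_half_unique.
exact: half_unique_of_surplus_ge1.
Qed.

End SurplusHalfOptimum.

Theorem lemma10 (R : realFieldType) (T : finType) (e : rel T)
  (e_sym : symmetric e) (e_irr : irreflexive e) (k : nat) :
  (~ rule1_applies e R k /\ ~ rule2_applies e R k /\ ~ rule3_applies e R k)
  <-> surplusG_ge e 2.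
Proof.
have rule1P : ~ rule1_applies e R k <-> surplusG_ge e 1.
  by rewrite -(half_unique_optimumP R e_sym); split=> [/NNPP | ? []].
split=> [[not1 [not2 not3]] Z Zne Zind | ge2].
  have := rule1P.1 not1 Z Zne Zind.
  have [s1 | ?] := eqVneq (surplus e Z) 1; last by lia.
  have [nbh_ind | nbh_dep] := boolP (independent e (nbh e Z)).
    by case: not3; split=> //; split=> //; exists Z.
  by case: not2; split=> //; exists Z.
have no_surplus1 Z : independent e Z -> surplus e Z <> 1.
  move=> Zind; have [-> | Zne] := eqVneq Z set0; first by rewrite surplus_set0.
  by have := ge2 Z Zne Zind; lia.
have not1 : ~ rule1_applies e R k.
  by apply/rule1P => Z Zne Zind; have := ge2 Z Zne Zind; lia.
split=> //; split=> [[_ [Z [Zind s1 _]]] | [_ [_ [Z [Zind s1 _]]]]];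
  exact: no_surplus1 Zind s1.
Qed.
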